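(* Let $S$ be a semigroup with unit element $1$, let $X$ be a nonempty set, and let $S_1,\dots,S_n$ be unital subsemigroups of $S$ acting on $X$ from the right (with $x(st)=(xs)t$ and the unit acting as the identity). Suppose that each $S_j$ is left-amenable and that the actions of the $S_j$ commute, i.e. $(xs)t=(xt)s$ for all $x\in X$, $s\in S_i$, $t\in S_j$, $i\neq j$. For $s\in S$ let $S_s:\mathbb{C}^X\to\mathbb{C}^X$ be the Koopman operator $S_sf(x)=f(xs)$. Then for every bounded function $f:X\to\mathbb{C}$ the following are equivalent: (i) $(S_{s_1}-\mathrm{Id})(S_{s_2}-\mathrm{Id})\cdots(S_{s_n}-\mathrm{Id})f=0$ for all $s_j\in S_j$, $j=1,\dots,n$; (ii) there exist functions $f_1,\dots,f_n:X\to\mathbb{C}$ with $f=f_1+\cdots+f_n$ such that for each $j$ the function $f_j$ is $S_j$-invariant, i.e. $S_{s}f_j=f_j$ for all $s\in S_j$.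
   Context: A semigroup $S_j$ is left-amenable if there is a left-invariant mean on $\ell^\infty(S_j)$, i.e. a positive linear functional $\mu$ on $\ell^\infty(S_j)$ with $\mu(\mathbf 1)=1$ and $\mu(g(s\,\cdot))=\mu(g)$ for all $g\in\ell^\infty(S_j)$, $s\in S_j$. *)

From Stdlib Require Import Reals.
From Coquelicot Require Import Coquelicot.
Open Scope R_scope.

Definition bounded_R {T : Type} (g : T -> R) : Prop :=
  exists M : R, forall t, Rabs (g t) <= M.

Definition bounded_C {X : Type} (f : X -> C) : Prop :=
  exists M : R, forall x, Cmod (f x) <= M.

(* Left-amenability of a semigroup (T, op): there is a left-invariant mean
   on l^oo(T), i.e. a positive linear functional mu on the bounded real
   functions with mu(1) = 1 and mu(g(s .)) = mu(g).  mu is given as a map on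
   all functions T -> R, but only its values on bounded functions matter. *)
Definition left_amenable {T : Type} (op : T -> T -> T) : Prop :=
  exists mu : (T -> R) -> R,
    (forall (g h : T -> R) (a b : R), bounded_R g -> bounded_R h ->
       mu (fun t => a * g t + b * h t) = a * mu g + b * mu h) /\
    (forall g : T -> R, bounded_R g -> (forall t, 0 <= g t) -> 0 <= mu g) /\
    mu (fun _ => 1) = 1 /\
    (forall (s : T) (g : T -> R), bounded_R g ->
       mu (fun t => g (op s t)) = mu g).

Definition sub_op {S : Type} (mul : S -> S -> S) (P : S -> Prop)
  (hP : forall s t, P s -> P t -> P (mul s t))
  (a b : {s : S | P s}) : {s : S | P s} :=
  exist P (mul (proj1_sig a) (proj1_sig b))
        (hP _ _ (proj2_sig a) (proj2_sig b)).

Definition koopman {X S : Type} (act : X -> S -> X) (s : S) (f : X -> C)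
  : X -> C := fun x => f (act x s).

(* (S_{s_0} - Id)(S_{s_1} - Id) ... (S_{s_(k-1)} - Id) f, indices from 0. *)
Fixpoint diff_prod {X S : Type} (act : X -> S -> X) (s : nat -> S) (k : nat)
  (f : X -> C) : X -> C :=
  match k with
  | O => f
  | Datatypes.S k' =>
      diff_prod act s k' (fun x => Cminus (koopman act (s k') f x) (f x))
  end.

Fixpoint fun_sum {X : Type} (fs : nat -> X -> C) (k : nat) : X -> C :=
  match k with
  | O => fun _ => RtoC 0
  | Datatypes.S k' => fun x => Cplus (fun_sum fs k' x) (fs k' x)
  end.

(* (ii) => (i): the factor S_{s_j} - Id kills f_j, and it commutes with the
   other factors because the actions commute.
   (i) => (ii) by induction on n: a left-invariant mean on S_n, applied along
   orbits, gives an averaging operator P_n onto the S_n-invariant functions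
   which commutes with the Koopman operators of the other S_j.  By (i) the
   function (S_{s_1} - Id)...(S_{s_{n-1}} - Id) f is S_n-invariant, hence fixed
   by P_n, so f - P_n f satisfies (i) for the first n - 1 semigroups and
   f = (f - P_n f) + P_n f. *)
From Stdlib Require Import Reals Lra Lia FunctionalExtensionality.
From Coquelicot Require Import Coquelicot.
Open Scope R_scope.

Definition invariant_under {X S : Type} (act : X -> S -> X) (Q : S -> Prop)
  (h : X -> C) : Prop :=
  forall u, Q u -> koopman act u h = h.

Definition commuting {X S : Type} (act : X -> S -> X) (u v : S) : Prop :=
  forall x, act (act x u) v = act (act x v) u.

Lemma Cminus_eq0 (a b : C) : (a - b)%C = RtoC 0 -> a = b.
Proof.
  intro H. replace a with ((a - b) + b)%C by ring. rewrite H. ring.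
Qed.

Lemma bounded_C_comp {X Y : Type} (h : X -> C) (k : Y -> X) :
  bounded_C h -> bounded_C (fun y => h (k y)).
Proof. intros [M HM]. exists M. intro y. apply HM. Qed.

Lemma bounded_C_sub {X : Type} (f g : X -> C) :
  bounded_C f -> bounded_C g -> bounded_C (fun x => (f x - g x)%C).
Proof.
  intros [M HM] [N HN]. exists (M + N). intro x.
  eapply Rle_trans; [apply Cmod_triangle|]. rewrite Cmod_opp.
  specialize (HM x); specialize (HN x). lra.
Qed.

Lemma bounded_fst {X : Type} (h : X -> C) :
  bounded_C h -> bounded_R (fun x => fst (h x)).
Proof.
  intros [M HM]. exists M. intro x. eapply Rle_trans; [|apply HM].
  eapply Rle_trans; [apply Rmax_l|apply Rmax_Cmod].
Qed.

Lemma bounded_snd {X : Type} (h : X -> C) :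
  bounded_C h -> bounded_R (fun x => snd (h x)).
Proof.
  intros [M HM]. exists M. intro x. eapply Rle_trans; [|apply HM].
  eapply Rle_trans; [apply Rmax_r|apply Rmax_Cmod].
Qed.

Lemma koopman_commuting {X S : Type} (act : X -> S -> X) (u v : S) (h : X -> C) :
  commuting act u v ->
  koopman act u (koopman act v h) = koopman act v (koopman act u h).
Proof.
  intro Huv. apply functional_extensionality; intro x. unfold koopman.
  now rewrite Huv.
Qed.

Lemma invariant_under_koopman_sub {X S : Type} (act : X -> S -> X)
  (Q : S -> Prop) (v : S) (g : X -> C) :
  (forall t, Q t -> commuting act t v) -> invariant_under act Q g ->
  invariant_under act Q (fun x => (koopman act v g x - g x)%C).
Proof.
  intros Hcomm Hg t Ht. apply functional_extensionality; intro x.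
  assert (Hgt : forall y, g (act y t) = g y) by exact (equal_f (Hg t Ht)).
  unfold koopman. now rewrite (Hcomm t Ht x), !Hgt.
Qed.

Section InvariantMean.

Variables (T : Type) (op : T -> T -> T) (mu : (T -> R) -> R).
Hypothesis mu_linear : forall (g h : T -> R) (a b : R),
  bounded_R g -> bounded_R h ->
  mu (fun t => a * g t + b * h t) = a * mu g + b * mu h.
Hypothesis mu_nonneg : forall g, bounded_R g -> (forall t, 0 <= g t) -> 0 <= mu g.
Hypothesis mu_one : mu (fun _ => 1) = 1.
Hypothesis mu_left_invariant : forall s g, bounded_R g ->
  mu (fun t => g (op s t)) = mu g.

Lemma bounded_R_one : bounded_R (fun _ : T => 1).
Proof. exists 1. intros. rewrite Rabs_R1. lra. Qed.

Lemma mean_const (c : R) : mu (fun _ => c) = c.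
Proof.
  pose proof (mu_linear _ _ c 0 bounded_R_one bounded_R_one) as E.
  rewrite mu_one in E.
  replace (fun _ : T => c * 1 + 0 * 1) with (fun _ : T => c) in E
    by (apply functional_extensionality; intros; ring).
  rewrite E. ring.
Qed.

Lemma mean_sub (F G : T -> R) : bounded_R F -> bounded_R G ->
  mu (fun t => F t - G t) = mu F - mu G.
Proof.
  intros bF bG.
  replace (fun t => F t - G t) with (fun t => 1 * F t + -1 * G t)
    by (apply functional_extensionality; intros; ring).
  rewrite mu_linear by assumption. ring.
Qed.

Lemma mean_abs_le (g : T -> R) (M : R) :
  (forall t, Rabs (g t) <= M) -> Rabs (mu g) <= M.
Proof.
  intro HM. assert (bg : bounded_R g) by (exists M; exact HM).
  assert (Hbetween : forall t, - M <= g t <= M)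
    by (intro t; apply Rabs_le_between, HM).
  assert (Hshift : forall c, - 1 <= c <= 1 ->
            0 <= mu (fun t => M * 1 + c * g t)).
  { intros c Hc. apply mu_nonneg.
    - exists (2 * M). intro t. apply Rabs_le.
      destruct (Hbetween t). split; nra.
    - intro t. destruct (Hbetween t). nra. }
  pose proof (Hshift (-1) ltac:(lra)) as Hminus.
  pose proof (Hshift 1 ltac:(lra)) as Hplus.
  rewrite mu_linear, mu_one in Hminus, Hplus by (apply bounded_R_one || exact bg).
  apply Rabs_le. lra.
Qed.

Variables (X : Type) (tact : X -> T -> X).
Hypothesis tact_op : forall x s t, tact x (op s t) = tact (tact x s) t.

Definition average (h : X -> C) : X -> C :=
  fun x => (mu (fun t => fst (h (tact x t))), mu (fun t => snd (h (tact x t)))).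

Lemma average_bounded (h : X -> C) : bounded_C h -> bounded_C (average h).
Proof.
  intros [M HM]. exists (sqrt 2 * M). intro x.
  eapply Rle_trans; [apply Cmod_2Rmax|].
  apply Rmult_le_compat_l; [apply sqrt_pos|].
  apply Rmax_lub; apply mean_abs_le; intro t;
    (eapply Rle_trans; [|apply (HM (tact x t))]);
    (eapply Rle_trans; [|apply Rmax_Cmod]); [apply Rmax_l | apply Rmax_r].
Qed.

Lemma average_sub (f g : X -> C) : bounded_C f -> bounded_C g ->
  average (fun x => (f x - g x)%C) = fun x => (average f x - average g x)%C.
Proof.
  intros bf bg. apply functional_extensionality; intro x.
  unfold average, Cminus, Cplus, Copp; simpl. f_equal;
  apply (mean_sub (fun t => _ (_ (tact x t))) (fun t => _ (_ (tact x t))));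
  apply bounded_fst || apply bounded_snd; now apply bounded_C_comp.
Qed.

Lemma average_invariant (h : X -> C) (s : T) :
  bounded_C h -> koopman tact s (average h) = average h.
Proof.
  intro bh. apply functional_extensionality; intro x. unfold average, koopman.
  f_equal; [rewrite <- (mu_left_invariant s (fun t => fst (h (tact x t))))
           |rewrite <- (mu_left_invariant s (fun t => snd (h (tact x t))))];
  try (apply bounded_fst || apply bounded_snd; now apply bounded_C_comp);
  f_equal; apply functional_extensionality; intro t; now rewrite tact_op.
Qed.

Lemma average_id (h : X -> C) :
  (forall s, koopman tact s h = h) -> average h = h.
Proof.
  intro Hh. apply functional_extensionality; intro x. unfold average.
  assert (Horbit : forall t, h (tact x t) = h x)
    by (intro t; exact (equal_f (Hh t) x)).
  replace (fun t => fst (h (tact x t))) with (fun _ : T => fst (h x))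
    by (apply functional_extensionality; intro t; now rewrite Horbit).
  replace (fun t => snd (h (tact x t))) with (fun _ : T => snd (h x))
    by (apply functional_extensionality; intro t; now rewrite Horbit).
  rewrite !mean_const. now destruct (h x).
Qed.

Lemma average_koopman {U : Type} (a : X -> U -> X) (u : U) (h : X -> C) :
  (forall x t, tact (a x u) t = a (tact x t) u) ->
  average (koopman a u h) = koopman a u (average h).
Proof.
  intro Hcomm. apply functional_extensionality; intro x.
  unfold average, koopman.
  f_equal; f_equal; apply functional_extensionality; intro t; now rewrite Hcomm.
Qed.

End InvariantMean.

Lemma diff_prod_ext {X S : Type} (act : X -> S -> X) (s s' : nat -> S) k g :
  (forall i, (i < k)%nat -> s i = s' i) ->
  diff_prod act s k g = diff_prod act s' k g.
Proof.
  revert g. induction k as [|k IHk]; intros g Hss'; simpl; [reflexivity|].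
  rewrite (Hss' k) by lia. apply IHk. intros i Hi. apply Hss'. lia.
Qed.

Lemma fun_sum_ext {X : Type} (fs fs' : nat -> X -> C) k :
  (forall i, (i < k)%nat -> fs i = fs' i) -> fun_sum fs k = fun_sum fs' k.
Proof.
  induction k as [|k IHk]; intros Hfs; simpl; [reflexivity|].
  rewrite IHk, (Hfs k); [reflexivity|lia|].
  intros i Hi. apply Hfs. lia.
Qed.

Section DiffProd.

Variables (X S : Type) (act : X -> S -> X) (s : nat -> S).

Lemma diff_prod_zero k : diff_prod act s k (fun _ => RtoC 0) = fun _ => RtoC 0.
Proof.
  induction k as [|k IHk]; simpl; [reflexivity|].
  etransitivity; [|exact IHk]. f_equal.
  apply functional_extensionality; intro x. unfold koopman. ring.
Qed.

Lemma diff_prod_add k (f g : X -> C) :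
  diff_prod act s k (fun x => (f x + g x)%C) =
  fun x => (diff_prod act s k f x + diff_prod act s k g x)%C.
Proof.
  revert f g. induction k as [|k IHk]; intros f g; simpl; [reflexivity|].
  rewrite <- IHk. f_equal. apply functional_extensionality; intro x.
  unfold koopman. ring.
Qed.

Lemma diff_prod_sub k (f g : X -> C) :
  diff_prod act s k (fun x => (f x - g x)%C) =
  fun x => (diff_prod act s k f x - diff_prod act s k g x)%C.
Proof.
  revert f g. induction k as [|k IHk]; intros f g; simpl; [reflexivity|].
  rewrite <- IHk. f_equal. apply functional_extensionality; intro x.
  unfold koopman. ring.
Qed.

(* [Tr] need only be additive on a class [B], e.g. on the bounded functions
   for an averaging operator. *)
Lemma diff_prod_commute (Tr : (X -> C) -> X -> C) (B : (X -> C) -> Prop) k :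
  (forall f g, B f -> B g -> B (fun x => (f x - g x)%C)) ->
  (forall i f, (i < k)%nat -> B f -> B (koopman act (s i) f)) ->
  (forall f g, B f -> B g ->
     Tr (fun x => (f x - g x)%C) = fun x => (Tr f x - Tr g x)%C) ->
  (forall i f, (i < k)%nat -> B f ->
     Tr (koopman act (s i) f) = koopman act (s i) (Tr f)) ->
  forall f, B f -> Tr (diff_prod act s k f) = diff_prod act s k (Tr f).
Proof.
  intros HBsub HBkoop HTsub HTkoop.
  induction k as [|k IHk]; intros f Bf; simpl; [reflexivity|].
  rewrite IHk.
  - rewrite HTsub, HTkoop by auto. reflexivity.
  - intros i g Hi. apply HBkoop. lia.
  - intros i g Hi. apply HTkoop. lia.
  - apply HBsub; auto.
Qed.

Lemma diff_prod_koopman (u : S) k (f : X -> C) :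
  (forall i, (i < k)%nat -> commuting act u (s i)) ->
  koopman act u (diff_prod act s k f) = diff_prod act s k (koopman act u f).
Proof.
  intro Hcomm. apply (diff_prod_commute _ (fun _ => True)); auto.
  intros i g Hi _. now apply koopman_commuting, Hcomm.
Qed.

Lemma diff_prod_invariant (Q : S -> Prop) k (f : X -> C) :
  (forall i t, (i < k)%nat -> Q t -> commuting act t (s i)) ->
  (forall u, Q u ->
     diff_prod act s k (fun x => (koopman act u f x - f x)%C) = fun _ => RtoC 0) ->
  invariant_under act Q (diff_prod act s k f).
Proof.
  intros Hcomm Hzero u Hu. rewrite diff_prod_koopman by auto.
  apply functional_extensionality; intro x. apply Cminus_eq0.
  pose proof (equal_f (Hzero u Hu) x) as Hx.
  now rewrite diff_prod_sub in Hx.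
Qed.

Lemma diff_prod_invariant_eq0 (Q : S -> Prop) j k (g : X -> C) :
  (j < k)%nat -> Q (s j) ->
  (forall i t, (i < k)%nat -> i <> j -> Q t -> commuting act t (s i)) ->
  invariant_under act Q g -> diff_prod act s k g = fun _ => RtoC 0.
Proof.
  revert g. induction k as [|k IHk]; intros g Hjk Hsj Hcomm Hg; [lia|]. simpl.
  destruct (Nat.eq_dec j k) as [<-|Hjk'].
  - rewrite <- (diff_prod_zero j). f_equal.
    apply functional_extensionality; intro x. rewrite (Hg (s j) Hsj). ring.
  - apply IHk; [lia|assumption| |].
    + intros i t Hi. apply Hcomm. lia.
    + apply invariant_under_koopman_sub; [|assumption].
      intros t Ht. apply Hcomm; auto.
Qed.

End DiffProd.

Section Decomposition.

Variables (M : Type) (mul : M -> M -> M) (X : Type) (act : X -> M -> X)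
  (n : nat) (Sj : nat -> M -> Prop).
Hypothesis M_inhabited : inhabited M.
Hypothesis Sj_mul : forall j s t, Sj j s -> Sj j t -> Sj j (mul s t).
Hypothesis Sj_amen : forall j, (j < n)%nat ->
  left_amenable (sub_op mul (Sj j) (Sj_mul j)).
Hypothesis act_mul : forall j, (j < n)%nat -> forall x s t, Sj j s -> Sj j t ->
  act x (mul s t) = act (act x s) t.
Hypothesis act_comm : forall i j, (i < n)%nat -> (j < n)%nat -> i <> j ->
  forall x s t, Sj i s -> Sj j t -> act (act x s) t = act (act x t) s.

Lemma Sj_commuting i j t u : (i < n)%nat -> (j < n)%nat -> i <> j ->
  Sj i t -> Sj j u -> commuting act t u.
Proof. intros Hi Hj Hij Ht Hu x. exact (act_comm i j Hi Hj Hij x t u Ht Hu). Qed.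

Record invariant_averaging (k : nat) (P : (X -> C) -> X -> C) : Prop := {
  averaging_bounded : forall h, bounded_C h -> bounded_C (P h);
  averaging_sub : forall f g, bounded_C f -> bounded_C g ->
    P (fun x => (f x - g x)%C) = fun x => (P f x - P g x)%C;
  averaging_invariant : forall h, bounded_C h -> invariant_under act (Sj k) (P h);
  averaging_id : forall h, invariant_under act (Sj k) h -> P h = h;
  averaging_koopman : forall i u h, (i < n)%nat -> i <> k -> Sj i u ->
    P (koopman act u h) = koopman act u (P h)
}.

Lemma invariant_averaging_exists k : (k < n)%nat ->
  exists P, invariant_averaging k P.
Proof.
  intro Hk. destruct (Sj_amen k Hk) as (mu & mu_lin & mu_pos & mu_one & mu_inv).
  pose (tact := fun x (t : {s | Sj k s}) => act x (proj1_sig t)).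
  assert (tact_op : forall x s t, tact x (sub_op mul (Sj k) (Sj_mul k) s t) =
                                  tact (tact x s) t).
  { intros x [s Hs] [t Ht]. exact (act_mul k Hk x s t Hs Ht). }
  exists (average _ mu _ tact). split.
  - now apply average_bounded.
  - now apply average_sub.
  - intros h bh u Hu. exact (average_invariant _ _ _ mu_inv _ _ tact_op h
                               (exist _ u Hu) bh).
  - intros h Hh. apply average_id; [assumption..|].
    intros [t Ht]. exact (Hh t Ht).
  - intros i u h Hi Hik Hu. apply average_koopman.
    intros x [t Ht]. exact (act_comm i k Hi Hk Hik x u t Hu Ht).
Qed.

Lemma annihilated_invariant k (s : nat -> M) (f : X -> C) : (k < n)%nat ->
  (forall j, (j < k)%nat -> Sj j (s j)) ->
  (forall s', (forall j, (j < S k)%nat -> Sj j (s' j)) ->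
     diff_prod act s' (S k) f = fun _ => RtoC 0) ->
  invariant_under act (Sj k) (diff_prod act s k f).
Proof.
  intros Hk Hs Hf. apply diff_prod_invariant.
  - intros i t Hi Ht. apply (Sj_commuting k i); auto; lia.
  - intros u Hu.
    pose (s' := fun i => if Nat.eq_dec i k then u else s i).
    assert (Hs' : forall j, (j < S k)%nat -> Sj j (s' j)).
    { intros j Hj. unfold s'.
      destruct (Nat.eq_dec j k) as [->|]; [assumption|apply Hs; lia]. }
    pose proof (Hf s' Hs') as Hzero. simpl in Hzero.
    replace (s' k) with u in Hzero
      by (unfold s'; destruct (Nat.eq_dec k k); congruence).
    rewrite (diff_prod_ext act s' s) in Hzero; [exact Hzero|].
    intros i Hi. unfold s'. destruct (Nat.eq_dec i k); [lia|reflexivity].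
Qed.

Lemma annihilated_sub_average k P (s : nat -> M) (f : X -> C) :
  (k < n)%nat -> invariant_averaging k P -> bounded_C f ->
  (forall j, (j < k)%nat -> Sj j (s j)) ->
  invariant_under act (Sj k) (diff_prod act s k f) ->
  diff_prod act s k (fun x => (f x - P f x)%C) = fun _ => RtoC 0.
Proof.
  intros Hk HP bf Hs Hinv.
  rewrite diff_prod_sub, <- (diff_prod_commute _ _ act s P bounded_C).
  - rewrite (averaging_id k P HP _ Hinv).
    apply functional_extensionality; intro x. ring.
  - intros g h bg bh. now apply bounded_C_sub.
  - intros i g Hi bg. exact (bounded_C_comp g _ bg).
  - exact (averaging_sub k P HP).
  - intros i g Hi bg. apply (averaging_koopman k P HP i); auto; lia.
  - exact bf.
Qed.

Lemma annihilated_decomposition k : (k <= n)%nat -> forall f, bounded_C f ->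
  (forall s, (forall j, (j < k)%nat -> Sj j (s j)) ->
     diff_prod act s k f = fun _ => RtoC 0) ->
  exists fs, f = fun_sum fs k /\
    forall j, (j < k)%nat -> invariant_under act (Sj j) (fs j).
Proof.
  induction k as [|k IHk]; intros Hk f bf Hf.
  - destruct M_inhabited as [u]. exists (fun _ _ => RtoC 0).
    split; [exact (Hf (fun _ => u) ltac:(intros; lia))|intros; lia].
  - destruct (invariant_averaging_exists k) as [P HP]; [lia|].
    destruct (IHk ltac:(lia) (fun x => (f x - P f x)%C)) as (fs & Hfs & Hinv).
    + apply bounded_C_sub; [assumption|now apply (averaging_bounded k P HP)].
    + intros s Hs. apply (annihilated_sub_average k P s f); try assumption.
      apply annihilated_invariant; [lia|assumption..].
    + exists (fun j => if Nat.eq_dec j k then P f else fs j). split.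
      * simpl. rewrite (fun_sum_ext _ fs k), <- Hfs.
        -- destruct (Nat.eq_dec k k) as [_|]; [|congruence].
           apply functional_extensionality; intro x. ring.
        -- intros i Hi. destruct (Nat.eq_dec i k); [lia|reflexivity].
      * intros j Hj. destruct (Nat.eq_dec j k) as [->|Hjk].
        -- apply (averaging_invariant k P HP _ bf).
        -- apply Hinv. lia.
Qed.

Lemma invariant_sum_annihilated (fs : nat -> X -> C) (s : nat -> M) m :
  (m <= n)%nat -> (forall j, (j < n)%nat -> Sj j (s j)) ->
  (forall j, (j < n)%nat -> invariant_under act (Sj j) (fs j)) ->
  diff_prod act s n (fun_sum fs m) = fun _ => RtoC 0.
Proof.
  intros Hm Hs Hfs. induction m as [|m IHm]; simpl.
  - apply diff_prod_zero.
  - rewrite diff_prod_add, IHm by lia.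
    rewrite (diff_prod_invariant_eq0 _ _ act s (Sj m) m n (fs m)).
    + apply functional_extensionality; intro x. ring.
    + lia.
    + apply Hs. lia.
    + intros i t Hi Hij Ht. apply (Sj_commuting m i); auto; lia.
    + apply Hfs. lia.
Qed.

End Decomposition.

Theorem theorem1p1
  (S : Type) (mul : S -> S -> S) (e : S)
  (mul_assoc : forall a b c, mul a (mul b c) = mul (mul a b) c)
  (mul_e_l : forall a, mul e a = a) (mul_e_r : forall a, mul a e = a)
  (X : Type) (X_ne : inhabited X)
  (n : nat) (hn : (1 <= n)%nat)
  (Sj : nat -> S -> Prop)
  (Sj_unit : forall j, (j < n)%nat -> Sj j e)
  (Sj_mul : forall j s t, Sj j s -> Sj j t -> Sj j (mul s t))
  (Sj_amen : forall j, (j < n)%nat -> left_amenable (sub_op mul (Sj j) (Sj_mul j)))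
  (act : X -> S -> X)
  (act_e : forall x, act x e = x)
  (act_mul : forall j, (j < n)%nat -> forall x s t, Sj j s -> Sj j t ->
     act x (mul s t) = act (act x s) t)
  (act_comm : forall i j, (i < n)%nat -> (j < n)%nat -> i <> j ->
     forall x s t, Sj i s -> Sj j t -> act (act x s) t = act (act x t) s)
  (f : X -> C) (f_bdd : bounded_C f) :
  (forall s : nat -> S, (forall j, (j < n)%nat -> Sj j (s j)) ->
     diff_prod act s n f = (fun _ => RtoC 0))
  <->
  (exists fs : nat -> X -> C,
     f = fun_sum fs n /\
     (forall j, (j < n)%nat -> forall s, Sj j s -> koopman act s (fs j) = fs j)).
Proof.
  split.
  - intro Hf.
    exact (annihilated_decomposition S mul X act n Sj (inhabits e) Sj_mul
             Sj_amen act_mul act_comm n (le_n n) f f_bdd Hf).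
  - intros (fs & -> & Hfs) s Hs.
    exact (invariant_sum_annihilated S X act n Sj act_comm fs s n (le_n n) Hs Hfs).
Qed.
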